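(* Let $\mathbf{k}$ be a local field and $n\geq1$. Let $(G_m)_m$ be a sequence of subgroups of $\mathrm{Bir}(\mathbb{P}^n_{\mathbf{k}})$ converging to $\mathrm{id}$. Then there exist $m_0>0$ and $d>0$ such that $G_m\subset\mathrm{Bir}(\mathbb{P}^n_{\mathbf{k}})_{\leq d}$ for all $m\geq m_0$.
   Context: $\mathrm{Bir}(\mathbb{P}^n_{\mathbf{k}})_{\leq d}$ is the set of birational maps of degree $\leq d$. A sequence of subgroups $(G_m)$ converges to $\mathrm{id}$ if for every open neighbourhood $U$ of $\mathrm{id}$ there is $m_0$ with $G_m\subset U$ for all $m>m_0$. Topology: the Euclidean topology, i.e. for $d\geq1$, $W_d(\mathbf{k})$ is the projective space of classes of non-zero $(n+1)$-tuples of degree-$d$ homogeneous polynomials in $\mathbf{k}[x_0,\dots,x_n]$ modulo scalars with its Euclidean topology; $H_d(\mathbf{k})\subset W_d(\mathbf{k})$ the subset defining birational maps; $\mathrm{Bir}(\mathbb{P}^n_{\mathbf{k}})_{\leq d}$ gets the quotient topology via the natural surjection $\pi_d\colon H_d(\mathbf{k})\to\mathrm{Bir}(\mathbb{P}^n_{\mathbf{k}})_{\leq d}$, and $\mathrm{Bir}(\mathbb{P}^n_{\mathbf{k}})$ the inductive limit topology. *)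

From HB Require Import structures.
From mathcomp Require Import all_boot all_algebra.
From mathcomp Require Import mpoly.
From Stdlib Require Reals.

Set Implicit Arguments.
Unset Strict Implicit.
Unset Printing Implicit Defensive.

Import GRing.Theory.
Local Open Scope ring_scope.

Notation Real := Stdlib.Reals.Rdefinitions.R.
Notation Rlt := Stdlib.Reals.Rdefinitions.Rlt.
Notation Rle := Stdlib.Reals.Rdefinitions.Rle.
Notation Rplus := Stdlib.Reals.Rdefinitions.Rplus.
Notation Rmult := Stdlib.Reals.Rdefinitions.Rmult.
Notation R0 := Stdlib.Reals.Rdefinitions.R0.
Notation R1 := Stdlib.Reals.Rdefinitions.R1.

(* compact).  This covers R, C, finite extensions of Q_p, F_q((t)).     *)
Section LocalField.
Variables (k : fieldType) (abs : k -> Real).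

Definition is_absolute_value : Prop :=
  (forall x, Rle R0 (abs x)) /\
  (forall x, abs x = R0 <-> x = 0) /\
  (forall x y, abs (x * y) = Rmult (abs x) (abs y)) /\
  (forall x y, Rle (abs (x + y)) (Rplus (abs x) (abs y))).

Definition abs_nontrivial : Prop := exists x, abs x <> R0 /\ abs x <> R1.

Definition seq_converges (u : nat -> k) (l : k) : Prop :=
  forall eps, Rlt R0 eps -> exists N, forall j, (N <= j)%N -> Rlt (abs (u j - l)) eps.

Definition seq_cauchy (u : nat -> k) : Prop :=
  forall eps, Rlt R0 eps -> exists N, forall i j, (N <= i)%N -> (N <= j)%N ->
    Rlt (abs (u i - u j)) eps.

Definition abs_complete : Prop :=
  forall u, seq_cauchy u -> exists l, seq_converges u l.

Definition abs_locally_compact : Prop :=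
  exists r, Rlt R0 r /\
    forall u : nat -> k, (forall j, Rle (abs (u j)) r) ->
      exists (phi : nat -> nat) (l : k),
        (forall j, (phi j < phi j.+1)%N) /\ seq_converges (fun j => u (phi j)) l.

Definition local_field : Prop :=
  is_absolute_value /\ abs_nontrivial /\ abs_complete /\ abs_locally_compact.

End LocalField.

(* Birational maps of P^n_k, represented by (n+1)-tuples of            *)
(* homogeneous polynomials of the same degree in k[x_0,...,x_n].      *)
Section Cremona.
Variables (k : fieldType) (n : nat).

Definition ptuple := 'I_n.+1 -> {mpoly k[n.+1]}.

Definition homog_tuple (d : nat) (f : ptuple) : Prop :=
  forall i, f i \is d.-homog.

Definition pcomp (f g : ptuple) : ptuple :=
  fun i => f i \mPo [tuple g j | j < n.+1].

Definition pid : ptuple := fun i => 'X_i.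

Definition pinverse (f g : ptuple) : Prop :=
  (exists h, h != 0 /\ forall i, pcomp f g i = h * 'X_i) /\
  (exists h, h != 0 /\ forall i, pcomp g f i = h * 'X_i).

Definition is_bir (f : ptuple) : Prop :=
  (exists d, homog_tuple d f) /\
  exists g, (exists e, homog_tuple e g) /\ pinverse f g.

Definition bir_equiv (f g : ptuple) : Prop :=
  forall i j, f i * g j = f j * g i.

Definition in_H (d : nat) (f : ptuple) : Prop := homog_tuple d f /\ is_bir f.

Definition Bir_le (d : nat) (f : ptuple) : Prop :=
  exists g, in_H d g /\ bir_equiv g f.

(* A subset of Bir(P^n) is represented by a predicate on birational tuples
   invariant under bir_equiv. *)
Definition bir_saturated (U : ptuple -> Prop) : Prop :=
  forall f g, is_bir f -> is_bir g -> bir_equiv f g -> U f -> U g.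

Definition bir_subset (U V : ptuple -> Prop) : Prop :=
  forall f, is_bir f -> U f -> V f.

Definition bir_subgroup (G : ptuple -> Prop) : Prop :=
  bir_saturated G /\ G pid /\
  (forall f g, is_bir f -> is_bir g -> G f -> G g -> G (pcomp f g)) /\
  (forall f g, is_bir f -> is_bir g -> pinverse f g -> G f -> G g).

(* Openness for the Euclidean topology: U is open in Bir(P^n) (inductive
   limit topology) iff for each d >= 1, pi_d^{-1}(U) is open in H_d for the
   topology induced by W_d; on tuples this reads: every f in H_d with
   [f] in U has a coefficient-wise eps-neighbourhood whose members in H_d
   lie in U. *)
Definition bir_open (abs : k -> Real) (U : ptuple -> Prop) : Prop :=
  forall d, (1 <= d)%N -> forall f, in_H d f -> U f ->
    exists eps, Rlt R0 eps /\
      forall g, in_H d g ->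
        (forall i (m : 'X_{1..n.+1}), Rlt (abs ((g i)@_m - (f i)@_m)) eps) ->
        U g.

Definition converges_to_id (abs : k -> Real) (G : nat -> ptuple -> Prop) : Prop :=
  forall U, bir_saturated U -> bir_open abs U -> U pid ->
    exists m0, forall m, (m0 < m)%N -> bir_subset (G m) U.

End Cremona.

(** If the degrees in G_m were unbounded, we could pick for every j a map
    g_j in some G_(m_j) with m_j > j that has no representative of degree
    at most j + 1.  The set U of birational maps distinct from every g_j
    contains id, and it is open: a representative f of degree d of a map in
    U stays away from the finitely many g_j with j < d, because f differs
    from g_j through a nonzero coefficient of some 2x2 minor, which moves
    continuously with f, while no map of degree <= d can be g_j for j >= d.
    Convergence then puts G_m inside U for m large, which is absurd since
    g_m lies in G_(m_m). *)
From Stdlib Require Import Reals Lra Classical ClassicalEpsilon.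
From Pilot Require Import Defs.
From HB Require Import structures.
From mathcomp Require Import all_boot all_algebra.
From mathcomp Require Import mpoly.
From mathcomp Require Import ring.

Set Implicit Arguments.
Unset Strict Implicit.
Unset Printing Implicit Defensive.

Import GRing.Theory.
Local Open Scope ring_scope.

Section BirationalTuples.
Variables (k : fieldType) (n : nat).
Implicit Types (f g q : ptuple k n).

Lemma mpolyXU_neq0 (i : 'I_n.+1) : ('X_i : {mpoly k[n.+1]}) != 0.
Proof. by rewrite -msupp_eq0 msuppX. Qed.

Lemma dhomogXU (i : 'I_n.+1) : ('X_i : {mpoly k[n.+1]}) \is 1.-homog.
Proof. by rewrite dhomogX; apply/eqP; exact: mdeg1. Qed.

Lemma comp_mpoly_dhomog_scale (p c : {mpoly k[n.+1]}) e (t : ptuple k n) :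
  p \is e.-homog ->
  p \mPo [tuple c * t j | j < n.+1] = c ^+ e * (p \mPo [tuple t j | j < n.+1]).
Proof.
move=> /dhomogP hp; rewrite !comp_mpolyE mulr_sumr big_seq [RHS]big_seq.
apply: eq_bigr => m hm; rewrite -scalerAr; congr (_ *: _).
under eq_bigr do rewrite tnth_mktuple exprMn.
rewrite big_split /= prodrXr -mdegE hp //.
by under [in RHS]eq_bigr do rewrite tnth_mktuple.
Qed.

Lemma pinverse_sym f g : pinverse f g -> pinverse g f.
Proof. by case. Qed.

Lemma pinverse_neq0 f g : pinverse f g -> forall i, f i != 0.
Proof.
move=> [[h [hnz fg]] _] i; apply/eqP => fi0.
have /esym/eqP := fg i; rewrite /Defs.pcomp /= fi0 comp_mpoly0.
by rewrite mulf_eq0 (negbTE hnz) (negbTE (mpolyXU_neq0 i)).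
Qed.

Lemma is_bir_neq0 f : is_bir f -> forall i, f i != 0.
Proof. by move=> [_ [g [_ fg]]]; exact: pinverse_neq0 fg. Qed.

Lemma bir_equiv_refl f : bir_equiv f f.
Proof. by move=> i j; rewrite mulrC. Qed.

Lemma bir_equiv_trans f g q :
  is_bir g -> bir_equiv f g -> bir_equiv g q -> bir_equiv f q.
Proof.
move=> /is_bir_neq0 /(_ ord0) g0 fg gq i l; apply: (mulIf g0).
rewrite mulrAC (fg i ord0) -mulrA (gq i l) mulrA -(fg l ord0).
by rewrite mulrAC.
Qed.

Lemma pid_in_H : in_H 1 (@pid k n).
Proof.
have pid_homog : homog_tuple 1 (@pid k n) by move=> i; exact: dhomogXU.
have pidK i : Defs.pcomp (@pid k n) (@pid k n) i = 1 * 'X_i.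
  by rewrite /Defs.pcomp /pid comp_mpolyXU mul1r -tnth_nth tnth_mktuple.
do 2!split=> //; first by exists 1%N.
exists (@pid k n); split; first by exists 1%N.
by split; exists 1; rewrite oner_eq0.
Qed.

(* X_0^e g represents the same map in degree d + e, and an inverse h of g
   stays an inverse: (X_0^e g) o h = h_0^e (g o h), and by homogeneity of h,
   h o (X_0^e g) = X_0^(e deg h) (h o g). *)
Lemma Bir_leD (d e : nat) f : Bir_le d f -> Bir_le (d + e) f.
Proof.
move=> [g [[g_homog [_ [h [[e' h_homog] gh]]]] gf]].
have h0 : h 0 != 0 by exact: pinverse_neq0 (pinverse_sym gh) 0.
case: gh => [[a [a_nz gh]] [b [b_nz hg]]].
pose c : {mpoly k[n.+1]} := 'X_0 ^+ e.
exists (fun i => c * g i); split; last by move=> i j; rewrite -!mulrA gf.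
have cg_homog : homog_tuple (d + e) (fun i => c * g i).
  move=> i; rewrite addnC -[e]mul1n.
  by apply: dhomogM (g_homog i); exact: dhomogMn (dhomogXU 0).
split=> //; split; first by exists (d + e)%N.
exists h; split; first by exists e'.
split.
- exists (h 0 ^+ e * a); split; first by rewrite mulf_neq0 // expf_neq0.
  move=> i; rewrite /Defs.pcomp rmorphM rmorphXn /= comp_mpolyXU.
  rewrite -tnth_nth tnth_mktuple.
  by have := gh i; rewrite /Defs.pcomp => ->; rewrite mulrA.
- exists (c ^+ e' * b); split.
    by rewrite mulf_neq0 // !expf_neq0 // mpolyXU_neq0.
  move=> i; rewrite /Defs.pcomp (comp_mpoly_dhomog_scale _ _ (h_homog i)).
  by have := hg i; rewrite /Defs.pcomp => ->; rewrite mulrA.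
Qed.

Lemma Bir_le_mono (e d : nat) f : (e <= d)%N -> Bir_le e f -> Bir_le d f.
Proof. by move=> /subnKC <-; exact: Bir_leD. Qed.

Lemma not_bir_equiv_coef f q : ~ bir_equiv f q ->
  exists i l m, (f i * q l - f l * q i)@_m != 0.
Proof.
move=> fq; apply: NNPP => minors0; apply: fq => i l.
apply/eqP; rewrite -subr_eq0; apply/eqP/mpolyP => m; rewrite mcoeff0.
by apply: NNPP => Pm; apply: minors0; exists i, l, m; apply/eqP.
Qed.

End BirationalTuples.

Section CoefficientTopology.
Variables (k : fieldType) (n : nat) (abs : k -> Real).
Hypothesis habs : is_absolute_value abs.

Lemma abs_ge0 x : Rle R0 (abs x).
Proof. by case: habs. Qed.

Lemma abs_eq0 x : abs x = R0 <-> x = 0.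
Proof. by case: habs => _ []. Qed.

Lemma abs0 : abs 0 = R0.
Proof. exact/abs_eq0. Qed.

Lemma absM x y : abs (x * y) = Rmult (abs x) (abs y).
Proof. by case: habs => _ [_ []]. Qed.

Lemma abs_triangle x y : Rle (abs (x + y)) (Rplus (abs x) (abs y)).
Proof. by case: habs => _ [_ []]. Qed.

Lemma abs1 : abs 1 = R1.
Proof.
have one_nz : abs 1 <> R0 by move/abs_eq0/eqP; rewrite oner_eq0.
have := absM 1 1; rewrite mulr1; have := abs_ge0 1; nra.
Qed.

Lemma absN x : abs (- x) = abs x.
Proof.
have absN1 : abs (-1) = R1.
  have := absM (-1) (-1); rewrite mulrNN mulr1 abs1; have := abs_ge0 (-1); nra.
by rewrite -mulN1r absM absN1; lra.
Qed.

Definition coef_norm1 (q : {mpoly k[n.+1]}) : Real :=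
  \big[Rplus/R0]_(u <- msupp q) abs q@_u.

Lemma coef_norm1_ge0 q : Rle R0 (coef_norm1 q).
Proof.
rewrite /coef_norm1; elim: (msupp q) => [|u s IH]; first by rewrite big_nil; lra.
by rewrite big_cons; have := abs_ge0 q@_u; lra.
Qed.

Lemma abs_coef_sum_le (q : {mpoly k[n.+1]}) (c : 'X_{1..n.+1} -> k) eps s :
  (forall u, Rle (abs (c u)) eps) ->
  Rle (abs (\sum_(u <- s) q@_u * c u))
      (Rmult eps (\big[Rplus/R0]_(u <- s) abs q@_u)).
Proof.
move=> c_le; elim: s => [|u s IH]; first by rewrite !big_nil abs0; lra.
rewrite !big_cons; apply: Rle_trans (abs_triangle _ _) _; rewrite absM.
have := c_le u; have := abs_ge0 q@_u; move: IH.
set S := abs (\sum_(j <- s) _); set N := \big[Rplus/R0]_(j <- s) _; nra.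
Qed.

Lemma abs_coefMX_le (D : {mpoly k[n.+1]}) u m eps :
  (forall m', Rle (abs D@_m') eps) -> Rle (abs (D * 'X_[u])@_m) eps.
Proof.
move=> D_le; case: (boolP (m \in msupp (D * 'X_[u]))) => [|/memN_msupp_eq0 ->].
  by rewrite (perm_mem (msuppMX D u)) => /mapP [m' _ ->]; rewrite mcoeffMX.
by rewrite abs0; apply: Rle_trans (abs_ge0 D@_m) (D_le m).
Qed.

Lemma abs_coefM_le (D q : {mpoly k[n.+1]}) m eps :
  (forall m', Rle (abs D@_m') eps) ->
  Rle (abs (D * q)@_m) (Rmult eps (coef_norm1 q)).
Proof.
move=> D_le; have -> : (D * q)@_m = \sum_(u <- msupp q) q@_u * (D * 'X_[u])@_m.
  rewrite {1}[q]mpolyE mulr_sumr raddf_sum /=.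
  by apply: eq_bigr => u _; rewrite -scalerAr mcoeffZ.
by apply: abs_coef_sum_le => u; exact: abs_coefMX_le.
Qed.

Definition coef_ball (eps : Real) (f g : ptuple k n) : Prop :=
  forall i m, Rlt (abs ((g i)@_m - (f i)@_m)) eps.

Lemma coef_ball_le eps eps' f g :
  Rle eps eps' -> coef_ball eps f g -> coef_ball eps' f g.
Proof. by move=> le_eps fg i m; apply: Rlt_le_trans (fg i m) le_eps. Qed.

(* If g ~ q then the minor f_i q_l - f_l q_i equals
   (g_l - f_l) q_i - (g_i - f_i) q_l, whose coefficients are O(eps). *)
Lemma not_bir_equiv_nbhd f q : ~ bir_equiv f q ->
  exists eps, Rlt R0 eps /\ forall g, coef_ball eps f g -> ~ bir_equiv g q.
Proof.
move=> /not_bir_equiv_coef [i [l [m minor_nz]]].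
set a := abs (f i * q l - f l * q i)@_m.
have a_gt0 : Rlt R0 a.
  have a_neq0 : a <> R0 by move/abs_eq0/eqP; exact/negP.
  by have := abs_ge0 (f i * q l - f l * q i)@_m; rewrite -/a; lra.
set C := Rplus R1 (Rplus (coef_norm1 (q i)) (coef_norm1 (q l))).
have Si_ge0 := coef_norm1_ge0 (q i); have Sl_ge0 := coef_norm1_ge0 (q l).
have C_gt0 : Rlt R0 C by rewrite /C; lra.
exists (Rdiv a C); split; first exact: Rdiv_lt_0_compat.
move=> g fg gq; set eps := Rdiv a C in fg.
have epsC : Rmult eps C = a.
  by rewrite /eps /Rdiv Rmult_assoc Rinv_l ?Rmult_1_r //; lra.
have eps_gt0 : Rlt R0 eps by exact: Rdiv_lt_0_compat.
have D_le x m' : Rle (abs (g x - f x)@_m') eps.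
  by rewrite mcoeffB; apply: Rlt_le; exact: fg.
have minorE : f i * q l - f l * q i = (g l - f l) * q i - (g i - f i) * q l.
  by rewrite !mulrBl (gq i l); ring.
have := abs_triangle ((g l - f l) * q i)@_m (- ((g i - f i) * q l)@_m).
rewrite absN -mcoeffB -minorE -/a.
have := abs_coefM_le (q i) m (D_le l); have := abs_coefM_le (q l) m (D_le i).
rewrite /C in epsC; nra.
Qed.

Lemma not_bir_equiv_nbhd_finite f (gs : nat -> ptuple k n) N :
  (forall j, (j < N)%N -> ~ bir_equiv f (gs j)) ->
  exists eps, Rlt R0 eps /\
    forall g, coef_ball eps f g -> forall j, (j < N)%N -> ~ bir_equiv g (gs j).
Proof.
elim: N => [|N IH] f_avoids; first by exists R1; split=> //; lra.
have [e [e_gt0 near_e]] := IH (fun j jN => f_avoids j (ltnW jN)).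
have [e' [e'_gt0 near_e']] := not_bir_equiv_nbhd (f_avoids N (ltnSn N)).
exists (Rmin e e'); split; first exact: Rmin_pos.
move=> g fg j; rewrite ltnS leq_eqVlt => /orP [/eqP ->|jN].
  by apply: near_e'; apply: coef_ball_le fg; exact: Rmin_r.
by apply: near_e jN; apply: coef_ball_le fg; exact: Rmin_l.
Qed.

End CoefficientTopology.

Section AvoidingADivergentSequence.
Variables (k : fieldType) (n : nat) (gs : nat -> ptuple k n).
Hypothesis gs_not_le : forall j, ~ Bir_le j.+1 (gs j).

Definition avoids (f : ptuple k n) : Prop := forall j, ~ bir_equiv f (gs j).

Lemma avoids_saturated : bir_saturated avoids.
Proof.
move=> f g _ g_bir fg f_avoids j ggs; apply: (f_avoids j).
exact: bir_equiv_trans g_bir fg ggs.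
Qed.

Lemma avoids_pid : avoids (@pid k n).
Proof.
move=> j pid_gs; apply: (gs_not_le (j := j)); apply: Bir_le_mono (ltn0Sn j) _.
by exists (@pid k n); split=> //; exact: pid_in_H.
Qed.

Lemma avoids_open (abs : k -> Real) :
  is_absolute_value abs -> bir_open abs avoids.
Proof.
move=> habs d _ f _ f_avoids.
have [eps [eps_gt0 near]] :=
  not_bir_equiv_nbhd_finite habs (N := d) (fun j _ => f_avoids j).
exists eps; split=> // g g_H fg j ggs.
case: (ltnP j d) => [jd|dj]; first exact: near fg j jd ggs.
by apply: (gs_not_le (j := j)); apply: Bir_le_mono (leqW dj) _; exists g.
Qed.

End AvoidingADivergentSequence.

Lemma unbounded_degrees_escape (k : fieldType) (n : nat)
    (G : nat -> ptuple k n -> Prop) :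
  ~ (exists m0 d, (0 < m0)%N /\ (0 < d)%N /\
       forall m, (m0 <= m)%N -> bir_subset (G m) (Bir_le d)) ->
  exists (ms : nat -> nat) (gs : nat -> ptuple k n), forall j,
    (j < ms j)%N /\ G (ms j) (gs j) /\ is_bir (gs j) /\ ~ Bir_le j.+1 (gs j).
Proof.
move=> unbounded.
suff /choice [p escape] : forall j, exists p : nat * ptuple k n,
    (j < p.1)%N /\ G p.1 p.2 /\ is_bir p.2 /\ ~ Bir_le j.+1 p.2.
  by exists (fun j => (p j).1), (fun j => (p j).2).
move=> j; apply: NNPP => none; apply: unbounded.
exists j.+1, j.+1; do 2 split=> //.
by move=> m jm f f_bir Gf; apply: NNPP => f_not_le; apply: none; exists (m, f).
Qed.

Theorem lemma4p3 (k : fieldType) (abs : k -> Real) (Hk : local_field abs)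
  (n : nat) (Hn : (1 <= n)%N)
  (G : nat -> ptuple k n -> Prop)
  (HG : forall m, bir_subgroup (G m))
  (Hconv : converges_to_id abs G) :
  exists m0 d, (0 < m0)%N /\ (0 < d)%N /\
    forall m, (m0 <= m)%N -> bir_subset (G m) (Bir_le d).
Proof.
have [habs _] := Hk.
apply: NNPP => /unbounded_degrees_escape [ms [gs escape]].
have gs_not_le j : ~ Bir_le j.+1 (gs j) by have [_ [_ []]] := escape j.
have [m0 G_avoids] := Hconv _ (@avoids_saturated _ _ gs)
  (avoids_open gs_not_le habs) (avoids_pid gs_not_le).
have [m0_lt [G_gs [gs_bir _]]] := escape m0.
exact: G_avoids _ m0_lt _ gs_bir G_gs m0 (bir_equiv_refl _).
Qed.
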